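(* Let $\{(\mathbf{x}_i,y_i)\}_{i=1}^m$ be training data with $\mathbf{x}_i\in\mathbb{R}^l$, $y_i\in\mathbb{R}$, let $k$ be a positive semidefinite kernel with kernel matrix $K\in\mathbb{R}^{m\times m}$, $K_{ij}=k(\mathbf{x}_i,\mathbf{x}_j)$, and let $K_{iM}$ denote the $i$-th row of $K$. Let $\lambda>0$, $\tau\ge 0$, and $L_\tau(\xi)=\frac12\min\{\xi^2,\tau^2\}$. Consider the primal robust LSSVM problem $$\min_{\alpha\in\mathbb{R}^m,\,b\in\mathbb{R}}\ \frac{\lambda}{2}\alpha^\top K\alpha+\frac1m\sum_{i=1}^m L_\tau\big(y_i-K_{iM}\alpha-b\big).$$ Then any stationary point of this problem can be obtained by solving an iteratively re-weighted LSSVM $$(\alpha^{(t)},b^{(t)})=\arg\min_{\alpha\in\mathbb{R}^m,\,b\in\mathbb{R}}\ \frac{\lambda}{2}\alpha^\top K\alpha+\frac{1}{2m}\sum_{i=1}^m\omega_i^{(t-1)}\big(y_i-K_{iM}\alpha-b\big)^2,$$ where $\omega_i^{(t)}$ is the value of the weight $\omega_i$ at iteration $t$, given by $\omega_i^{(t)}=1$ if $|\xi_i^{(t)}|\le\tau$ and $\omega_i^{(t)}=0$ if $|\xi_i^{(t)}|>\tau$, with $\xi_i^{(t)}=y_i-K_{iM}\alpha^{(t)}-b^{(t)}$.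
   Context: The weight update corresponds to $\omega^{(t)}\in\arg\min_{\omega\in\mathbb{R}_+^m}J(\alpha^{(t)},b^{(t)},\omega)$, where $J(\alpha,b,\omega)=\frac{\lambda}{2}\alpha^\top K\alpha+\frac1m\sum_{i=1}^m\frac12\omega_i\xi_i^2+\frac1m\sum_{i=1}^m\frac{\tau^2}{2}(1-\omega_i)_+$ and $\xi_i=y_i-K_{iM}\alpha-b$; the iteration alternates minimization of $J$ in $(\alpha,b)$ and in $\omega$. *)

From HB Require Import structures.
From mathcomp Require Import all_boot all_order all_algebra.
Set Implicit Arguments. Unset Strict Implicit. Unset Printing Implicit Defensive.
Import Order.TTheory GRing.Theory Num.Theory.
Local Open Scope ring_scope.

Section RobustLSSVM.
Variable R : realFieldType.

Definition psd_kernel (l : nat) (k : 'rV[R]_l -> 'rV[R]_l -> R) : Prop :=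
  (forall x z, k x z = k z x) /\
  (forall (n : nat) (xs : 'I_n -> 'rV[R]_l) (c : 'cV[R]_n),
      0 <= (c^T *m (\matrix_(i, j) k (xs i) (xs j)) *m c) 0 0).

Definition kmat (l m : nat) (k : 'rV[R]_l -> 'rV[R]_l -> R)
  (xs : 'I_m -> 'rV[R]_l) : 'M[R]_m := \matrix_(i, j) k (xs i) (xs j).

Definition Ltau (tau xi : R) : R := Num.min (xi ^+ 2) (tau ^+ 2) / 2.

Definition resid (m : nat) (K : 'M[R]_m) (y : 'I_m -> R)
  (alpha : 'cV[R]_m) (b : R) (i : 'I_m) : R :=
  y i - (row i K *m alpha) 0 0 - b.

Definition robust_obj (m : nat) (K : 'M[R]_m) (y : 'I_m -> R) (lam tau : R)
  (alpha : 'cV[R]_m) (b : R) : R :=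
  lam / 2 * (alpha^T *m K *m alpha) 0 0
  + m%:R^-1 * \sum_(i < m) Ltau tau (resid K y alpha b i).

Definition weighted_obj (m : nat) (K : 'M[R]_m) (y : 'I_m -> R) (lam : R)
  (w : 'I_m -> R) (alpha : 'cV[R]_m) (b : R) : R :=
  lam / 2 * (alpha^T *m K *m alpha) 0 0
  + (2 * m%:R)^-1 * \sum_(i < m) w i * (resid K y alpha b i) ^+ 2.

Definition weight (tau xi : R) : R := if `|xi| <= tau then 1 else 0.

(* stationary point of a (nonsmooth) function of (alpha, b) in the
   directional (d-stationarity) sense: the lower one-sided directional
   derivative is nonnegative in every direction, i.e.
   liminf_{t->0+} (F(z + t d) - F(z))/t >= 0 for all d. *)
Definition stationary (m : nat) (F : 'cV[R]_m -> R -> R)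
  (alpha : 'cV[R]_m) (b : R) : Prop :=
  forall (da : 'cV[R]_m) (db : R) (eps : R), 0 < eps ->
    exists2 delta : R, 0 < delta &
      forall t : R, 0 < t -> t < delta ->
        - (eps * t) <= F (alpha + t *: da) (b + t * db) - F alpha b.

End RobustLSSVM.

(* Put w := weight(xi(alpha, b)).  Since min(x'^2, tau^2) <= w x'^2 + (1 - w) tau^2
   with equality at x' = xi_i, the difference robust_obj - weighted_obj is maximal
   at (alpha, b); hence every directional derivative of weighted_obj at (alpha, b)
   dominates the corresponding one of robust_obj, so (alpha, b) is also stationary
   for weighted_obj.  The latter is a convex quadratic along every line (K is
   positive semidefinite and w >= 0), and a stationary point of such a function
   is a global minimiser. *)
From HB Require Import structures.
From mathcomp Require Import all_boot all_order all_algebra.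
From mathcomp Require Import ring lra.
Import Order.TTheory GRing.Theory Num.Theory.
Local Open Scope ring_scope.

Lemma mxquad_line (R : comPzRingType) (m : nat) (K : 'M[R]_m) (u v : 'cV[R]_m) (t : R) :
  ((u + t *: v)^T *m K *m (u + t *: v)) 0 0 =
  (u^T *m K *m u) 0 0 + t * ((u^T *m K *m v) 0 0 + (v^T *m K *m u) 0 0)
  + t ^+ 2 * (v^T *m K *m v) 0 0.
Proof.
rewrite [_^T]linearD /= [(_ *: _)^T]linearZ /= !mulmxDl !mulmxDr.
by rewrite -!scalemxAl -!scalemxAr !mxE; ring.
Qed.

Section RobustLSSVM.
Variable R : realFieldType.

Lemma weight_ge0 (tau xi : R) : 0 <= weight tau xi.
Proof. by rewrite /weight; case: ifP. Qed.

Lemma Ltau_sub_weight_max (tau x x' : R) : 0 <= tau ->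
  Ltau tau x' - weight tau x * x' ^+ 2 / 2 <= Ltau tau x - weight tau x * x ^+ 2 / 2.
Proof.
move=> htau; rewrite /Ltau /weight.
have le_min_sqr : Num.min (x' ^+ 2) (tau ^+ 2) <= x' ^+ 2 by rewrite ge_min lexx.
have le_min_tau : Num.min (x' ^+ 2) (tau ^+ 2) <= tau ^+ 2 by rewrite ge_min lexx orbT.
case: ifP => [/ler_normlP [hx1 hx2] | /negbT].
- have hxtau : x ^+ 2 <= tau ^+ 2 by nra.
  by rewrite (min_l hxtau); lra.
- rewrite -ltNge ltr_normr => /orP hx.
  have hxtau : tau ^+ 2 <= x ^+ 2 by case: hx; nra.
  by rewrite (min_r hxtau); lra.
Qed.

Lemma quadratic_stationary_ge0 (B C : R) : 0 <= C ->
  (forall eps, 0 < eps -> exists2 delta, 0 < delta &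
     forall t, 0 < t -> t < delta -> - (eps * t) <= t * B + t ^+ 2 * C) ->
  0 <= B + C.
Proof.
move=> hC hst; rewrite leNgt; apply/negP => hBC.
have heps : 0 < - (B + C) / 2 by lra.
have [delta hdelta hdel] := hst _ heps.
pose t := Num.min (delta / 2) 1.
have ht0 : 0 < t by rewrite lt_min ltr01 andbT; lra.
have ht1 : t <= 1 by rewrite ge_min lexx orbT.
have htdelta : t < delta by rewrite gt_min; apply/orP; left; lra.
have htC : t ^+ 2 * C <= t * C by rewrite expr2 -mulrA ler_piMl // mulr_ge0 // ltW.
have hBCt : (B + C) * t < 0 by rewrite pmulr_llt0.
have := hdel t ht0 htdelta; lra.
Qed.

Section Stationarity.
Variable m : nat.
Implicit Types (F G : 'cV[R]_m -> R -> R) (alpha : 'cV[R]_m) (b : R).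

Lemma stationary_majorant F G alpha b :
  (forall alpha' b', F alpha' b' - G alpha' b' <= F alpha b - G alpha b) ->
  stationary F alpha b -> stationary G alpha b.
Proof.
move=> hmax hF da db eps heps; have [delta hdelta hdel] := hF da db eps heps.
exists delta => // t ht0 htdelta; apply: le_trans (hdel t ht0 htdelta) _.
by have := hmax (alpha + t *: da) (b + t * db); lra.
Qed.

Lemma stationary_line_quadratic_min F alpha b :
  (forall da db, exists B C, 0 <= C /\ forall t,
     F (alpha + t *: da) (b + t * db) = F alpha b + t * B + t ^+ 2 * C) ->
  stationary F alpha b -> forall alpha' b', F alpha b <= F alpha' b'.
Proof.
move=> hline hst alpha' b'.
have [B [C [hC hF]]] := hline (alpha' - alpha) (b' - b).
have hBC : 0 <= B + C.
  apply: quadratic_stationary_ge0 => // eps heps.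
  have [delta hdelta hdel] := hst (alpha' - alpha) (b' - b) eps heps.
  by exists delta => // t ht0 htdelta; have := hdel t ht0 htdelta; rewrite hF; lra.
have := hF 1; rewrite scale1r mul1r addrC subrK [b + _]addrC subrK => ->; lra.
Qed.

End Stationarity.

Section Objectives.
Variables (m : nat) (K : 'M[R]_m) (y : 'I_m -> R).
Implicit Types (alpha da : 'cV[R]_m) (b db : R).

Lemma resid_line alpha da b db t i :
  resid K y (alpha + t *: da) (b + t * db) i =
  resid K y alpha b i - t * ((row i K *m da) 0 0 + db).
Proof. by rewrite /resid mulmxDr -scalemxAr !mxE; ring. Qed.

Lemma weighted_obj_line (lam : R) (w : 'I_m -> R) alpha b da db :
  (forall c : 'cV[R]_m, 0 <= (c^T *m K *m c) 0 0) -> 0 <= lam -> (forall i, 0 <= w i) ->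
  exists B C, 0 <= C /\ forall t,
    weighted_obj K y lam w (alpha + t *: da) (b + t * db) =
    weighted_obj K y lam w alpha b + t * B + t ^+ 2 * C.
Proof.
move=> hK hlam hw.
pose r i := (row i K *m da) 0 0 + db.
pose xi i := resid K y alpha b i.
pose c : R := (2 * m%:R)^-1.
exists (lam / 2 * ((alpha^T *m K *m da) 0 0 + (da^T *m K *m alpha) 0 0)
        + c * \sum_(i < m) (- (2 * w i * xi i * r i))).
exists (lam / 2 * (da^T *m K *m da) 0 0 + c * \sum_(i < m) w i * r i ^+ 2).
split.
  have hc : 0 <= c by rewrite invr_ge0 mulr_ge0 ?ler0n.
  by rewrite addr_ge0 ?mulr_ge0 ?sumr_ge0 // => [|i _]; [lra | rewrite mulr_ge0 ?sqr_ge0].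
move=> t; rewrite /weighted_obj mxquad_line -/c.
have -> : \sum_(i < m) w i * resid K y (alpha + t *: da) (b + t * db) i ^+ 2 =
    \sum_(i < m) w i * xi i ^+ 2 + t * \sum_(i < m) (- (2 * w i * xi i * r i))
    + t ^+ 2 * \sum_(i < m) w i * r i ^+ 2.
  rewrite !mulr_sumr -!big_split /=; apply: eq_bigr => i _.
  by rewrite resid_line /xi /r; ring.
by rewrite /xi; ring.
Qed.

Lemma robust_sub_weighted lam tau w alpha b :
  robust_obj K y lam tau alpha b - weighted_obj K y lam w alpha b =
  m%:R^-1 * \sum_(i < m) (Ltau tau (resid K y alpha b i)
                          - w i * resid K y alpha b i ^+ 2 / 2).
Proof.
rewrite sumrB -(mulr_suml _ _ (fun i => w i * _)) /robust_obj /weighted_obj invfM.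
by ring.
Qed.

Lemma robust_sub_weighted_max lam tau alpha b : 0 <= tau ->
  let w i := weight tau (resid K y alpha b i) in
  forall alpha' b',
    robust_obj K y lam tau alpha' b' - weighted_obj K y lam w alpha' b' <=
    robust_obj K y lam tau alpha b - weighted_obj K y lam w alpha b.
Proof.
move=> htau w alpha' b'; rewrite !robust_sub_weighted.
rewrite ler_wpM2l ?invr_ge0 ?ler0n //; apply: ler_sum => i _.
exact: Ltau_sub_weight_max.
Qed.

End Objectives.
End RobustLSSVM.

Theorem proposition1 (R : realFieldType) (l m : nat)
  (xs : 'I_m -> 'rV[R]_l) (y : 'I_m -> R)
  (k : 'rV[R]_l -> 'rV[R]_l -> R) (lam tau : R)
  (hm : (0 < m)%N) (hk : psd_kernel k) (hlam : 0 < lam) (htau : 0 <= tau)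
  (alpha : 'cV[R]_m) (b : R) :
  stationary (robust_obj (kmat k xs) y lam tau) alpha b ->
  let w := fun i => weight tau (resid (kmat k xs) y alpha b i) in
  forall (alpha' : 'cV[R]_m) (b' : R),
    weighted_obj (kmat k xs) y lam w alpha b
      <= weighted_obj (kmat k xs) y lam w alpha' b'.
Proof.
move=> hst w.
apply: stationary_line_quadratic_min.
  move=> da db; apply: weighted_obj_line (ltW hlam) _ => [c | i].
  - exact: hk.2.
  - exact: weight_ge0.
apply: stationary_majorant hst.
exact: robust_sub_weighted_max.
Qed.
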